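(* Fix an alphabet $\Sigma=\{a_1,\dots,a_\sigma\}$ with $\sigma\ge 1$. Then: (i) every word of length $n$ over $\Sigma$ has at most $n^2$ distinct Abelian periods; (ii) for every $n\ge 1$ divisible by $\sigma$, the word $w=(a_1a_2\cdots a_\sigma)^{n/\sigma}$ has Abelian period $(h,p)$ for every integer $p$ with $1\le p\le n$ and $p\equiv 0 \pmod{\sigma}$ and every integer $h$ with $0\le h\le \min(p-1,\,n-p)$. Consequently there is a constant $c>0$ depending only on $\sigma$ such that, for every $n$ divisible by $\sigma$, this word has at least $c\,n^2$ distinct Abelian periods. Hence the maximum number of Abelian periods of a word of length $n$ over $\Sigma$ is $\Theta(n^2)$.
   Context: Words are finite sequences over a finite alphabet $\Sigma=\{a_1,\dots,a_\sigma\}$; positions are numbered from $1$, $w[i]$ is the $i$-th letter and $|w|$ the length. For a word $u$, its Parikh vector is $\mathcal{P}_u=(|u|_{a_1},\dots,|u|_{a_\sigma})$, where $|u|_a$ is the number of occurrences of the letter $a$ in $u$; its norm is $|\mathcal{P}_u|=\sum_i \mathcal{P}_u[i]=|u|$. For Parikh vectors $\mathcal{P},\mathcal{Q}$ write $\mathcal{P}\subset\mathcal{Q}$ if $\mathcal{P}[i]\le\mathcal{Q}[i]$ for all $1\le i\le\sigma$ and $|\mathcal{P}|<|\mathcal{Q}|$ (and $\mathcal{Q}\supset\mathcal{P}$ means the same). A word $w$ has Abelian period $(h,p)$ (integers $h\ge0$, $p\ge1$) if $w=u_0u_1\cdots u_{k-1}u_k$ for some $k\ge 2$ and words $u_0,\dots,u_k$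 (where $u_0$ and $u_k$ may be empty) with $|u_0|=h$, $|u_1|=p$ and $\mathcal{P}_{u_0}\subset\mathcal{P}_{u_1}=\mathcal{P}_{u_2}=\cdots=\mathcal{P}_{u_{k-1}}\supset\mathcal{P}_{u_k}$. Two Abelian periods are distinct if they are distinct pairs $(h,p)$. *)

From mathcomp Require Import all_boot all_order all_algebra.
Set Implicit Arguments. Unset Strict Implicit. Unset Printing Implicit Defensive.

Definition parikh (T : finType) (u : seq T) : {ffun T -> nat} :=
  [ffun a => count_mem a u].

Definition pnorm (T : finType) (P : {ffun T -> nat}) : nat := \sum_(a : T) P a.

Definition psub (T : finType) (P Q : {ffun T -> nat}) : Prop :=
  (forall a, P a <= Q a) /\ pnorm P < pnorm Q.

(* w has Abelian period (h,p): w = u_0 u_1 ... u_k, k >= 2, |u_0| = h,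
   |u_1| = p, P_{u_0} ⊂ P_{u_1} = ... = P_{u_{k-1}} ⊃ P_{u_k}.
   The list us = [u_0; ...; u_k] has size k+1. *)
Definition abelian_period (T : finType) (w : seq T) (h p : nat) : Prop :=
  1 <= p /\
  exists us : seq (seq T),
    [/\ 3 <= size us /\ flatten us = w,
        size (nth [::] us 0) = h /\ size (nth [::] us 1) = p,
        (forall i, 1 <= i < (size us).-1 ->
            parikh (nth [::] us i) = parikh (nth [::] us 1)),
        psub (parikh (nth [::] us 0)) (parikh (nth [::] us 1))
      & psub (parikh (nth [::] us (size us).-1)) (parikh (nth [::] us 1))].

Definition cyc_word (sigma n : nat) : seq 'I_sigma :=
  flatten (nseq (n %/ sigma) (enum 'I_sigma)).

From mathcomp Require Import all_boot all_order all_algebra.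
From mathcomp Require Import zify.
Import Order.TTheory GRing.Theory Num.Theory.

(* Upper bound: the Parikh vector of a word has norm equal to its length, so
   an Abelian period (h, p) of w satisfies h < p <= |w| (from P_{u_0} ⊂ P_{u_1}
   and |u_1| <= |w|); hence distinct periods lie in [0, |w|) x [1, |w|], a set
   of |w|^2 pairs.

   Lower bound: we index the word (a_1 ... a_sigma)^(n/sigma) by positions,
   writing it as the image of iota 0 n under i |-> i mod sigma.  Cutting
   iota 0 n into a head of length h, q blocks of length p and a tail of length
   r < p, every block of length p = k sigma contains each letter exactly k
   times, while any factor shorter than k sigma contains each letter at most
   k times; this gives the Abelian period (h, p).  Counting the pairs
   (h, sigma j) with h < t <= j < 2t, t = ceil(n / (3 sigma)), yields at least
   n^2 / (9 sigma^2) distinct periods. *)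

Lemma pnorm_parikh (T : finType) (u : seq T) : pnorm (parikh u) = size u.
Proof.
rewrite /pnorm /parikh; under eq_bigr => a _ do rewrite ffunE.
elim: u => [|x u IH] /=; first by rewrite big1.
rewrite big_split /= IH (bigD1 x) //= eqxx big1 ?addn0 // => a /negbTE.
by rewrite eq_sym => ->.
Qed.

Lemma size_nth_flatten (T : Type) (ss : seq (seq T)) i :
  size (nth [::] ss i) <= size (flatten ss).
Proof.
elim: ss i => [|s ss IH] [|i] //=; rewrite size_cat ?leq_addr //.
exact: leq_trans (IH i) (leq_addl _ _).
Qed.

Lemma abelian_period_bounds (T : finType) (w : seq T) h p :
  abelian_period w h p -> h < p /\ 1 <= p <= size w.
Proof.
case=> p1 [us [[_ Hflat] [Hh Hp] _ [_ Hnorm] _]].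
split; first by move: Hnorm; rewrite !pnorm_parikh Hh Hp.
by rewrite p1 -Hflat -Hp size_nth_flatten.
Qed.

Lemma abelian_periods_le_sqr (T : finType) (w : seq T) (s : seq (nat * nat)) :
  uniq s -> (forall x, x \in s -> abelian_period w x.1 x.2) ->
  size s <= (size w) ^ 2.
Proof.
move=> s_uniq s_periods.
have s_sub : {subset s <= [seq (h, p) | p <- iota 1 (size w), h <- iota 0 (size w)]}.
  move=> [h p] /s_periods /abelian_period_bounds [/= hp /andP [p1 pn]].
  by apply/allpairsP; exists (p, h); rewrite !mem_iota; split=> //=; lia.
apply: leq_trans (uniq_leq_size s_uniq s_sub) _.
by rewrite size_allpairs !size_iota.
Qed.

Definition cut (h p q r : nat) : seq (seq nat) :=
  iota 0 h :: [seq iota (h + i * p) p | i <- iota 0 q] ++ [:: iota (h + q * p) r].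

Lemma size_cut h p q r : size (cut h p q r) = q.+2.
Proof. by rewrite /= size_cat size_map size_iota addn1. Qed.

Lemma flatten_cut h p q r : flatten (cut h p q r) = iota 0 (h + q * p + r).
Proof.
have blocks k : flatten [seq iota (h + i * p) p | i <- iota 0 k] = iota h (k * p).
  elim: k => [|k IH] //; rewrite -addn1 iotaD map_cat flatten_cat IH /= cats0.
  by rewrite add0n mulnDl mul1n iotaD.
by rewrite /= flatten_cat blocks /= cats0 -iotaD -[h in iota h]add0n -!iotaD addnA.
Qed.

Lemma nth_cut_block h p q r i :
  i < q -> nth [::] (cut h p q r) i.+1 = iota (h + i * p) p.
Proof.
by move=> iq; rewrite /= nth_cat size_map size_iota iq (nth_map 0) ?size_iota // nth_iota.
Qed.

Lemma nth_cut_last h p q r : nth [::] (cut h p q r) q.+1 = iota (h + q * p) r.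
Proof. by rewrite /= nth_cat size_map size_iota ltnn subnn. Qed.

Section CyclicWord.
Variable sigma : nat.
Hypothesis sigma_gt0 : 0 < sigma.

Definition letter (i : nat) : 'I_sigma := Ordinal (ltn_pmod i sigma_gt0).

Lemma enum_letter : enum 'I_sigma = map letter (iota 0 sigma).
Proof.
rewrite -val_enum_ord -map_comp -[LHS]map_id; apply: eq_map => x /=.
by apply: val_inj; rewrite /= modn_small.
Qed.

Lemma cyc_word_letters n :
  cyc_word sigma n = map letter (iota 0 (n %/ sigma * sigma)).
Proof.
rewrite /cyc_word; elim: (n %/ sigma) => [|k IH] //=.
rewrite IH mulSn iotaD map_cat enum_letter; congr (_ ++ _).
rewrite -[in iota sigma _](addn0 sigma) iotaDl -map_comp addn0; apply: eq_map => x /=.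
by apply: val_inj; rewrite /= modnDl.
Qed.

Notation at_residue a := (fun i => i %% sigma == a).

Lemma count_residue_window (a : nat) s : a < sigma ->
  count (at_residue a) (iota s sigma) = 1.
Proof.
move=> a_lt; elim: s => [|s IH].
  rewrite (@eq_in_count _ _ (pred1 a)); last first.
    by move=> i; rewrite mem_iota /= => i_lt; rewrite modn_small.
  by rewrite count_uniq_mem ?iota_uniq // mem_iota a_lt.
have shift : count (at_residue a) (iota s (sigma + 1))
           = count (at_residue a) (iota s (1 + sigma)) by rewrite addnC.
move: shift; rewrite !iotaD !count_cat IH addn1 /= modnDr; lia.
Qed.

Lemma count_residue_blocks (a : nat) s k : a < sigma ->
  count (at_residue a) (iota s (k * sigma)) = k.
Proof.
move=> a_lt; elim: k s => [|k IH] s //=.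
by rewrite mulSn iotaD count_cat count_residue_window // IH add1n.
Qed.

Lemma parikh_block s k : parikh (map letter (iota s (k * sigma))) = [ffun=> k].
Proof.
apply/ffunP => a; rewrite !ffunE count_map.
by rewrite (@eq_count _ _ (at_residue a)) ?count_residue_blocks.
Qed.

Lemma psub_short_factor s s' l k : l < k * sigma ->
  psub (parikh (map letter (iota s l))) (parikh (map letter (iota s' (k * sigma)))).
Proof.
move=> l_lt; split; last by rewrite !pnorm_parikh !size_map !size_iota.
move=> a; rewrite (parikh_block s') -(parikh_block s k) !ffunE.
by rewrite -(subnKC (ltnW l_lt)) iotaD map_cat count_cat leq_addr.
Qed.

Lemma cyc_word_abelian_period n p h : sigma %| n -> 1 <= p <= n -> sigma %| p ->
  h <= minn (p - 1) (n - p) -> abelian_period (cyc_word sigma n) h p.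
Proof.
move=> n_dvd /andP [p_gt0 p_le] p_dvd; rewrite leq_min => /andP [h_lt h_le].
set q := (n - h) %/ p; set r := (n - h) %% p.
have q_gt0 : 0 < q by rewrite divn_gt0 //; lia.
have n_eq : h + q * p + r = n by rewrite -addnA /q /r -divn_eq; lia.
have p_eq : p = p %/ sigma * sigma by rewrite divnK.
have head : psub (parikh (map letter (iota 0 h))) (parikh (map letter (iota h p))).
  by rewrite p_eq; apply: psub_short_factor; rewrite -p_eq; lia.
split=> //; exists (map (map letter) (cut h p q r)).
rewrite size_map size_cut -[q.+2.-1]/q.+1 !(nth_map [::]) ?size_cut //.
rewrite nth_cut_last (nth_cut_block _ _ _ _ _ q_gt0) mul0n addn0 [nth _ _ 0]/=; split.
- by rewrite -map_flatten flatten_cut n_eq cyc_word_letters divnK.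
- by rewrite !size_map !size_iota.
- move=> [|i] // /andP [_ i_lt].
  have i_in : i.+1 < size (cut h p q r) by rewrite size_cut; lia.
  by rewrite (nth_map [::]) // nth_cut_block // p_eq !parikh_block.
- exact: head.
- by rewrite p_eq; apply: psub_short_factor; rewrite -p_eq ltn_pmod.
Qed.

Lemma cyc_word_many_periods n : sigma %| n ->
  exists s : seq (nat * nat),
    [/\ uniq s,
        (forall x, x \in s -> abelian_period (cyc_word sigma n) x.1 x.2)
      & ((9 * sigma ^ 2)%N%:R^-1 * (n ^ 2)%:R <= (size s)%:R :> rat)%R].
Proof.
move=> n_dvd; set m := n %/ sigma; set t := (m + 2) %/ 3.
have n_eq : n = m * sigma by rewrite divnK.
have t_le : 3 * t <= m + 2 by rewrite mulnC leq_divM.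
have t_ge : m <= 3 * t.
  by have := ltn_pmod (m + 2) (isT : 0 < 3); have := divn_eq (m + 2) 3; lia.
exists [seq (h, sigma * j) | h <- iota 0 t, j <- iota t t]; split.
- apply: allpairs_uniq; rewrite ?iota_uniq //.
  move=> [a b] [a' b'] _ _ /= [-> /eqP]; rewrite eqn_mul2l gtn_eqF //=.
  by move/eqP ->.
- move=> x /allpairsP [[h j] [/=]]; rewrite !mem_iota => h_in j_in -> /=.
  have j_le : j <= sigma * j by rewrite leq_pmull.
  have mj_le : m - j <= sigma * (m - j) by rewrite leq_pmull.
  have n_sub : n - sigma * j = sigma * (m - j) by rewrite n_eq mulnC mulnBr.
  apply: cyc_word_abelian_period; rewrite ?dvdn_mulr //.
  + rewrite muln_gt0 sigma_gt0 n_eq mulnC leq_pmul2r //; lia.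
  + by rewrite leq_min n_sub; apply/andP; split; lia.
- rewrite size_allpairs !size_iota ler_pdivrMl ?ltr0n ?muln_gt0 ?expn_gt0 ?sigma_gt0 //.
  rewrite -natrM ler_nat n_eq.
  have : m * m <= (3 * t) * (3 * t) by apply: leq_mul.
  nia.
Qed.

End CyclicWord.

Theorem lemma1 (sigma : nat) (Hsigma : 1 <= sigma) :
  (* (i) at most n^2 distinct Abelian periods *)
  (forall (w : seq 'I_sigma) (s : seq (nat * nat)),
      uniq s -> (forall x, x \in s -> abelian_period w x.1 x.2) ->
      size s <= (size w) ^ 2)
  /\
  (* (ii) the periods of (a_1...a_sigma)^(n/sigma) *)
  (forall n p h, 1 <= n -> sigma %| n ->
      1 <= p <= n -> sigma %| p -> h <= minn (p - 1) (n - p) ->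
      abelian_period (cyc_word sigma n) h p)
  /\
  (* consequence: at least c n^2 distinct Abelian periods *)
  (exists c : rat, (0 < c)%R /\
     forall n, sigma %| n ->
       exists s : seq (nat * nat),
         [/\ uniq s,
             (forall x, x \in s -> abelian_period (cyc_word sigma n) x.1 x.2)
           & (c * (n ^ 2)%:R <= (size s)%:R)%R]).
Proof.
split; first exact: abelian_periods_le_sqr.
split; first by move=> n p h _; apply: cyc_word_abelian_period.
exists ((9 * sigma ^ 2)%N%:R^-1)%R; split; last exact: cyc_word_many_periods.
by rewrite invr_gt0 ltr0n muln_gt0 expn_gt0 Hsigma.
Qed.
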